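(* For every formula $\varphi$ of propositional linear temporal logic, $\mathrm{LTL} \models \neg \Box (\varphi\leftrightarrow\bigcirc\Box\neg\varphi)$.
   Context: Propositional linear temporal logic (LTL): formulas are built from propositional constants and $\textbf{false}$ with $\rightarrow$, the ''next'' modality $\bigcirc$ and the ''always'' modality $\Box$; $\neg,\vee,\wedge,\leftrightarrow,\textbf{true}$ are as usual and $\diamondsuit\varphi \equiv \neg\Box\neg\varphi$. A temporal (Kripke) structure is an infinite sequence $\mathcal{K}=(\eta_0,\eta_1,\dots)$ of valuations; $\mathcal{K}_i(\bigcirc\varphi)=\mathcal{K}_{i+1}(\varphi)$ and $\mathcal{K}_i(\Box\varphi)=\mathfrak{tt}$ iff $\mathcal{K}_j(\varphi)=\mathfrak{tt}$ for all $j\ge i$. $\mathrm{LTL}\models\varphi$ means $\varphi$ is true at every state of every temporal structure. Here $\bigcirc$ denotes the LTL ''next'' operator. *)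

From Stdlib Require Import Arith.

Inductive formula : Type :=
| Var : nat -> formula
| Fls : formula
| Imp : formula -> formula -> formula
| Next : formula -> formula
| Always : formula -> formula.

Definition Neg (A : formula) : formula := Imp A Fls.
Definition Tru : formula := Neg Fls.
Definition Or (A B : formula) : formula := Imp (Neg A) B.
Definition And (A B : formula) : formula := Neg (Imp A (Neg B)).
Definition Iff (A B : formula) : formula := And (Imp A B) (Imp B A).
Definition Eventually (A : formula) : formula := Neg (Always (Neg A)).

(* A temporal structure: infinite sequence of valuations eta_0, eta_1, ... *)
Definition structure : Type := nat -> (nat -> bool).

Fixpoint holds (K : structure) (i : nat) (A : formula) : Prop :=
  match A with
  | Var v => K i v = true
  | Fls => False
  | Imp A B => holds K i A -> holds K i B
  | Next A => holds K (S i) A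
  | Always A => forall j, i <= j -> holds K j A
  end.

Definition ltl_valid (A : formula) : Prop :=
  forall (K : structure) (i : nat), holds K i A.

From Stdlib Require Import Lia Classical.

(* If [phi] held at some [j], it would fail at every later state, in particular at
   [j + 1]; but then [next always not phi] fails at [j + 1], so [phi] holds again
   after [j + 1], a contradiction.  Hence [phi] never holds, which makes
   [next always not phi] true and therefore [phi] true. *)

Lemma holds_Iff (K : structure) (i : nat) (A B : formula) :
  holds K i (Iff A B) <-> (holds K i A <-> holds K i B).
Proof.
  simpl; split.
  - intros H; apply NNPP; tauto.
  - tauto.
Qed.

Lemma not_always_iff_next_never (P : nat -> Prop) (i : nat) :
  ~ (forall j, i <= j -> (P j <-> forall k, S j <= k -> ~ P k)).
Proof.
  intros Hiff.
  assert (never : forall j, i <= j -> ~ P j).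
  { intros j Hij Pj.
    assert (later : forall k, S j <= k -> ~ P k) by (apply Hiff; assumption).
    apply (later (S j)); [lia|].
    apply Hiff; [lia|].
    intros k Hk; apply later; lia. }
  apply (never i); [lia|].
  apply Hiff; [lia|].
  intros k Hk; apply never; lia.
Qed.

Theorem mainTheorem1 : forall phi : formula,
  ltl_valid (Neg (Always (Iff phi (Next (Always (Neg phi)))))).
Proof.
  intros phi K i H.
  apply (not_always_iff_next_never (fun j => holds K j phi) i).
  intros j Hj; apply (holds_Iff K j phi (Next (Always (Neg phi)))), H, Hj.
Qed.
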